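(* Let $X,Y$ be proper geodesic metric spaces and let $f:X\to Y$ be a stable embedding. Then the induced map $\partial f:\partial_MX\to\partial_MY$ on Morse boundaries is a homeomorphism onto its image. Moreover, if $f$ is the orbit map $g\mapsto g\cdot y_0$ of a finitely generated group $G$ (with a word metric) acting by isometries on $Y$, then $\partial f$ is $G$-equivariant.
   Context: A Morse gauge is a function $N:\mathbb{R}_{\geq 1}\times\mathbb{R}_{\geq 0}\to\mathbb{R}_{\geq 0}$; a (quasi)geodesic is $N$-Morse if every $(K,C)$-quasigeodesic with endpoints on it lies in its $N(K,C)$-neighborhood. A quasi-isometric embedding $f:X\to Y$ is a stable embedding if there is a Morse gauge $N$ such that any two points of $f(X)$ are joined by an $N$-Morse geodesic in $Y$. For a basepoint $e$, $X^{(N)}_e$ is the set of points $y$ with an $N$-Morse geodesic $[e,y]$, $\partial X^{(N)}_e$ its sequential Gromov boundary, and the Morse boundary $\partial_MX_e=\bigcup_N\partial X^{(N)}_e$ carries the direct limit topology over Morse gauges ordered pointwise (for proper spaces the basepoint only changes it by a natural homeomorphism). The induced map $\partial f$ sends the class of a sequence $(x_n)\subset X^{(N)}_e$ converging at infinity to the class of $(f(x_n))$. *)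

From Stdlib Require Import Reals List.
Open Scope R_scope.

Record MetricSpace := {
  pt :> Type;
  dist : pt -> pt -> R;
  dist_refl : forall x, dist x x = 0;
  dist_sep : forall x y, dist x y = 0 -> x = y;
  dist_sym : forall x y, dist x y = dist y x;
  dist_tri : forall x y z, dist x z <= dist x y + dist y z }.
Arguments dist {m} _ _.

Definition seq_conv {X : MetricSpace} (u : nat -> X) (l : X) : Prop :=
  forall eps, 0 < eps -> exists n0, forall n, (n0 <= n)%nat -> dist (u n) l < eps.

(* proper: closed balls are compact (= sequentially compact in a metric space) *)
Definition proper (X : MetricSpace) : Prop :=
  forall (x : X) (r : R) (u : nat -> X), (forall n, dist x (u n) <= r) ->
    exists (phi : nat -> nat) (l : X),
      (forall n, (phi n < phi (S n))%nat) /\ seq_conv (fun n => u (phi n)) l.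

Definition is_geodesic {X : MetricSpace} (g : R -> X) (L : R) : Prop :=
  0 <= L /\ forall s t, 0 <= s <= L -> 0 <= t <= L -> dist (g s) (g t) = Rabs (s - t).

Definition geodesic_from_to {X : MetricSpace} (g : R -> X) (x y : X) : Prop :=
  is_geodesic g (dist x y) /\ g 0 = x /\ g (dist x y) = y.

Definition geodesic_space (X : MetricSpace) : Prop :=
  forall x y : X, exists g : R -> X, geodesic_from_to g x y.

Definition is_quasigeodesic {X : MetricSpace} (K C : R) (s : R -> X) (a b : R) : Prop :=
  a <= b /\ forall t t', a <= t <= b -> a <= t' <= b ->
    Rabs (t - t') / K - C <= dist (s t) (s t') <= K * Rabs (t - t') + C.

Definition MorseGauge := R -> R -> R.
Definition is_gauge (N : MorseGauge) : Prop :=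
  forall K C, 1 <= K -> 0 <= C -> 0 <= N K C.

Definition on_image {X : MetricSpace} (g : R -> X) (L : R) (p : X) : Prop :=
  exists u, 0 <= u <= L /\ p = g u.

Definition is_morse {X : MetricSpace} (N : MorseGauge) (g : R -> X) (L : R) : Prop :=
  forall (K C : R) (s : R -> X) (a b : R), 1 <= K -> 0 <= C ->
    is_quasigeodesic K C s a b -> on_image g L (s a) -> on_image g L (s b) ->
    forall t, a <= t <= b -> exists u, 0 <= u <= L /\ dist (s t) (g u) <= N K C.

Definition morse_stratum_pt {X : MetricSpace} (N : MorseGauge) (e y : X) : Prop :=
  exists g : R -> X, geodesic_from_to g e y /\ is_morse N g (dist e y).

Definition qi_embedding {X Y : MetricSpace} (f : X -> Y) : Prop :=
  exists K C, 1 <= K /\ 0 <= C /\ forall x x' : X,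
    dist x x' / K - C <= dist (f x) (f x') <= K * dist x x' + C.

Definition stable_embedding {X Y : MetricSpace} (f : X -> Y) : Prop :=
  qi_embedding f /\
  exists N, is_gauge N /\ forall x x' : X,
    exists g : R -> Y, geodesic_from_to g (f x) (f x') /\ is_morse N g (dist (f x) (f x')).

Definition gromov_prod {X : MetricSpace} (e x y : X) : R :=
  (dist e x + dist e y - dist x y) / 2.

Definition conv_at_inf {X : MetricSpace} (e : X) (u : nat -> X) : Prop :=
  forall M, exists n0, forall i j, (n0 <= i)%nat -> (n0 <= j)%nat ->
    M <= gromov_prod e (u i) (u j).

Definition bequiv {X : MetricSpace} (e : X) (u v : nat -> X) : Prop :=
  forall M, exists n0, forall i j, (n0 <= i)%nat -> (n0 <= j)%nat ->
    M <= gromov_prod e (u i) (v j).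

Definition liminf_ge {X : MetricSpace} (e : X) (u v : nat -> X) (r : R) : Prop :=
  forall eps, 0 < eps -> exists n0, forall i j, (n0 <= i)%nat -> (n0 <= j)%nat ->
    r - eps <= gromov_prod e (u i) (v j).

(* u represents a point of the sequential boundary of X^(N)_e *)
Definition stratum_seq {X : MetricSpace} (N : MorseGauge) (e : X) (u : nat -> X) : Prop :=
  (forall n, morse_stratum_pt N e (u n)) /\ conv_at_inf e u.

(* u represents a point of the Morse boundary d_M X_e; points of d_M X_e are
   the bequiv-classes of such sequences *)
Definition MB_seq {X : MetricSpace} (e : X) (u : nat -> X) : Prop :=
  exists N, is_gauge N /\ stratum_seq N e u.

(* a subset of d_M X_e, given as a class-invariant predicate on representatives *)
Definition MB_saturated {X : MetricSpace} (e : X) (U : (nat -> X) -> Prop) : Prop :=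
  forall u v, MB_seq e u -> MB_seq e v -> bequiv e u v -> U u -> U v.

Definition stratum_nbhd {X : MetricSpace} (N : MorseGauge) (e : X) (u : nat -> X) (r : R)
  (v : nat -> X) : Prop :=
  exists u' v', stratum_seq N e u' /\ stratum_seq N e v' /\
    bequiv e u u' /\ bequiv e v v' /\ liminf_ge e u' v' r.

(* U meets d X^(N)_e in an open subset of d X^(N)_e *)
Definition stratum_open {X : MetricSpace} (N : MorseGauge) (e : X) (U : (nat -> X) -> Prop) : Prop :=
  forall u, stratum_seq N e u -> U u ->
    exists r, forall v, stratum_seq N e v -> stratum_nbhd N e u r v -> U v.

(* open sets of the direct limit topology on d_M X_e *)
Definition MB_open {X : MetricSpace} (e : X) (U : (nat -> X) -> Prop) : Prop :=
  MB_saturated e U /\ forall N, is_gauge N -> stratum_open N e U.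

Definition seqmap {X Y : Type} (f : X -> Y) (u : nat -> X) : nat -> Y := fun n => f (u n).

Definition boundary_map_homeo_onto_image {X Y : MetricSpace} (f : X -> Y) (e : X) : Prop :=
  (forall u, MB_seq e u -> MB_seq (f e) (seqmap f u)) /\
  (forall u v, MB_seq e u -> MB_seq e v -> bequiv e u v ->
     bequiv (f e) (seqmap f u) (seqmap f v)) /\
  (forall u v, MB_seq e u -> MB_seq e v -> bequiv (f e) (seqmap f u) (seqmap f v) ->
     bequiv e u v) /\
  (forall U, MB_open (f e) U -> MB_open e (fun u => U (seqmap f u))) /\
  (* open onto its image (with the subspace topology) *)
  (forall V, MB_open e V -> exists U, MB_open (f e) U /\
     forall u, MB_seq e u -> (V u <-> U (seqmap f u))).

Record Group := {
  gcar :> Type;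
  gmul : gcar -> gcar -> gcar;
  ginv : gcar -> gcar;
  gone : gcar;
  gmul_assoc : forall x y z, gmul x (gmul y z) = gmul (gmul x y) z;
  gmul_1l : forall x, gmul gone x = x;
  gmul_Vl : forall x, gmul (ginv x) x = gone }.
Arguments gmul {g} _ _.
Arguments ginv {g} _.
Arguments gone {g}.

Definition letter_val {G : Group} (l : bool * G) : G :=
  if fst l then snd l else ginv (snd l).
Definition word_val {G : Group} (w : list (bool * G)) : G :=
  fold_right (fun l acc => gmul (letter_val l) acc) gone w.
Definition word_over {G : Group} (S : list G) (w : list (bool * G)) : Prop :=
  forall l, In l w -> In (snd l) S.

Definition is_word_length {G : Group} (S : list G) (g : G) (n : nat) : Prop :=
  (exists w, word_over S w /\ word_val w = g /\ length w = n) /\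
  (forall w, word_over S w -> word_val w = g -> (n <= length w)%nat).

Definition isometric_action (G : Group) (X : MetricSpace) (act : G -> X -> X) : Prop :=
  (forall x, act gone x = x) /\
  (forall g h x, act (gmul g h) x = act g (act h x)) /\
  (forall g x y, dist (act g x) (act g y) = dist x y).

(* X (with the G-action actX and vertex map iota) is a model of the Cayley graph of
   G with respect to the finite generating list S: iota is G-equivariant, an isometric
   embedding of (G, word metric d_S), and every point is within 1/2 of a vertex *)
Definition cayley_model (G : Group) (S : list G) (X : MetricSpace)
  (actX : G -> X -> X) (iota : G -> X) : Prop :=
  isometric_action G X actX /\
  (forall g h, iota (gmul g h) = actX g (iota h)) /\
  (forall g h, exists n, is_word_length S (gmul (ginv g) h) n /\ dist (iota g) (iota h) = INR n) /\
  (forall x, exists g, dist x (iota g) <= 1 / 2).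

(** The Morse strata behave like hyperbolic spaces: geodesics from the base
    point to two N-Morse points fellow-travel up to their Gromov product, so
    the Gromov product on X^(N)_e satisfies the four-point condition with a
    constant depending only on N.  A stable embedding f is a quasi-isometric
    embedding whose image lies in a single Morse stratum of Y; quasi-geodesics
    of X are sent to quasi-geodesics close to N-Morse geodesics, so every
    geodesic of X is Morse for a gauge depending on N and the quasi-isometry
    constants, and Gromov products in X and Y are affinely comparable.  Hence
    f preserves and reflects convergence at infinity, equivalence of sequences
    and the neighbourhoods V_N(p,r) up to an affine change of radius, which
    gives continuity and injectivity of the boundary map and openness onto its
    image; for openness at a point outside the image one uses that the image of
    the boundary is closed in every stratum.  Equivariance holds because the
    orbit map moves f(g x) and g f(x) a bounded distance apart, and bounded
    perturbations do not change boundary points. *)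

From Stdlib Require Import Reals Lra Lia Classical ClassicalEpsilon.
Open Scope R_scope.

Arguments dist_refl {m} x.
Arguments dist_sym {m} x y.
Arguments dist_tri {m} x y z.

Lemma dist_nonneg {Z : MetricSpace} (x y : Z) : 0 <= dist x y.
Proof.
  pose proof (dist_tri x y x) as T.
  rewrite dist_refl, (dist_sym y x) in T. lra.
Qed.

Lemma Rabs_minus_le a b : a <= b -> Rabs (a - b) = b - a.
Proof. intros. rewrite Rabs_left1 by lra. lra. Qed.

Lemma Rabs_minus_ge a b : b <= a -> Rabs (a - b) = a - b.
Proof. intros. rewrite Rabs_right by lra. lra. Qed.

Lemma Rdiv_le_compat_r a b K : 0 < K -> a <= b -> a / K <= b / K.
Proof.
  intros. unfold Rdiv.
  apply Rmult_le_compat_r; [left; apply Rinv_0_lt_compat|]; lra.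
Qed.

Lemma Rle_mult_of_div_le a b K : 0 < K -> a / K <= b -> a <= K * b.
Proof.
  intros HK H. apply (Rmult_le_compat_l K) in H; [|lra].
  replace (K * (a / K)) with a in H by (field; lra). exact H.
Qed.

Lemma Rdiv_le_of_le_mult a b K : 0 < K -> a <= K * b -> a / K <= b.
Proof.
  intros HK H. apply (Rdiv_le_compat_r _ _ K HK) in H.
  replace (K * b / K) with b in H by (field; lra). exact H.
Qed.

Lemma predicate_switch_within_one (A : R -> Prop) a b : a <= b -> A a -> ~ A b ->
  exists t1 t2, a <= t1 <= t2 /\ t2 <= b /\ t2 - t1 <= 1 /\ A t1 /\ ~ A t2.
Proof.
  intros Hab HAa HAb.
  set (A' := fun t => a <= t <= b /\ A t).
  assert (Hbd : bound A') by (exists b; intros t [Ht _]; lra).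
  destruct (completeness A' Hbd (ex_intro _ a (conj (conj (Rle_refl a) Hab) HAa)))
    as [m [Hub Hlub]].
  assert (Hma : a <= m) by (apply Hub; split; [lra|exact HAa]).
  assert (Hmb : m <= b) by (apply Hlub; intros t [Ht _]; lra).
  assert (Ht1 : exists t1, A' t1 /\ m - 1/2 < t1).
  { apply NNPP. intro Hn. assert (m <= m - 1/2); [|lra].
    apply Hlub. intros t Ht. apply Rnot_lt_le. intro Hlt. apply Hn. exists t. auto. }
  destruct Ht1 as [t1 [[Ht1ab HA1] Hlt1]].
  assert (Ht1m : t1 <= m) by (apply Hub; split; auto).
  exists t1, (Rmin b (m + 1/2)).
  unfold Rmin. destruct Rle_dec as [Hle|Hgt].
  - split; [lra|]. split; [lra|]. split; [lra|]. split; [exact HA1|exact HAb].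
  - split; [lra|]. split; [lra|]. split; [lra|]. split; [exact HA1|].
    intro HA. pose proof (Hub (m + 1/2) ltac:(split; [lra|exact HA])). lra.
Qed.

Section Geodesics.
Context {Z : MetricSpace}.

Lemma geodesic_dist (g : R -> Z) x y s t :
  geodesic_from_to g x y -> 0 <= s <= dist x y -> 0 <= t <= dist x y ->
  dist (g s) (g t) = Rabs (s - t).
Proof. intros [[_ H] _] Hs Ht. apply H; auto. Qed.

Lemma geodesic_dist_le (g : R -> Z) x y s t :
  geodesic_from_to g x y -> 0 <= s <= dist x y -> 0 <= t <= dist x y -> s <= t ->
  dist (g s) (g t) = t - s.
Proof. intros. rewrite (geodesic_dist g x y s t) by auto. apply Rabs_minus_le; auto. Qed.

Lemma dist_start_geodesic (g : R -> Z) x y s :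
  geodesic_from_to g x y -> 0 <= s <= dist x y -> dist x (g s) = s.
Proof.
  intros Hg Hs. pose proof Hg as [_ [H0 _]].
  rewrite <- H0 at 1. rewrite (geodesic_dist_le g x y 0 s); auto; lra.
Qed.

Lemma dist_geodesic_end (g : R -> Z) x y s :
  geodesic_from_to g x y -> 0 <= s <= dist x y -> dist (g s) y = dist x y - s.
Proof.
  intros Hg Hs. pose proof Hg as [_ [_ H1]].
  rewrite <- H1 at 1. rewrite (geodesic_dist_le g x y s (dist x y)); auto; lra.
Qed.

Lemma geodesic_from_to_geodesic (g : R -> Z) x y :
  geodesic_from_to g x y -> is_geodesic g (dist x y).
Proof. intros [H _]; exact H. Qed.

Lemma on_image_start (g : R -> Z) x y : geodesic_from_to g x y -> on_image g (dist x y) x.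
Proof. intros [_ [H0 _]]. exists 0. pose proof (dist_nonneg x y). split; [lra|auto]. Qed.

Lemma on_image_end (g : R -> Z) x y : geodesic_from_to g x y -> on_image g (dist x y) y.
Proof. intros [_ [_ H1]]. exists (dist x y). pose proof (dist_nonneg x y). split; [lra|auto]. Qed.

Lemma geodesic_reverse (g : R -> Z) x y :
  geodesic_from_to g x y -> geodesic_from_to (fun t => g (dist x y - t)) y x.
Proof.
  intros [[HL H] [H0 H1]]. unfold geodesic_from_to, is_geodesic.
  rewrite (dist_sym y x). split; [split|split].
  - exact HL.
  - intros s t Hs Ht. rewrite H by lra. rewrite Rabs_minus_sym. f_equal. ring.
  - rewrite Rminus_0_r. exact H1.
  - rewrite Rminus_diag. exact H0.
Qed.

Lemma geodesic_subsegment (g : R -> Z) x y u1 u2 : geodesic_from_to g x y ->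
  0 <= u1 <= dist x y -> 0 <= u2 <= dist x y ->
  exists z : R -> Z, geodesic_from_to z (g u1) (g u2) /\
    forall tau, 0 <= tau <= dist (g u1) (g u2) ->
      exists v, 0 <= v <= dist x y /\ z tau = g v.
Proof.
  intros Hg H1 H2. pose proof (geodesic_dist g x y u1 u2 Hg H1 H2) as Hd.
  destruct (Rle_dec u1 u2) as [Hle|Hgt].
  - rewrite Rabs_minus_le in Hd by lra.
    exists (fun t => g (u1 + t)). unfold geodesic_from_to, is_geodesic. rewrite Hd.
    split; [split; [split|split]|].
    + lra.
    + intros s t Hs Ht. rewrite (geodesic_dist g x y) by (auto; lra). f_equal. ring.
    + f_equal. ring.
    + f_equal. ring.
    + intros tau Ht. exists (u1 + tau). split; [lra|auto].
  - rewrite Rabs_minus_ge in Hd by lra.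
    exists (fun t => g (u1 - t)). unfold geodesic_from_to, is_geodesic. rewrite Hd.
    split; [split; [split|split]|].
    + lra.
    + intros s t Hs Ht. rewrite (geodesic_dist g x y) by (auto; lra).
      rewrite Rabs_minus_sym. f_equal. ring.
    + f_equal. ring.
    + f_equal. ring.
    + intros tau Ht. exists (u1 - tau). split; [lra|auto].
Qed.

Definition clamp L t := Rmax 0 (Rmin L t).

Lemma clamp_in L t : 0 <= L -> 0 <= clamp L t <= L.
Proof. intros. unfold clamp, Rmax, Rmin. repeat destruct Rle_dec; lra. Qed.

Lemma clamp_id L t : 0 <= t <= L -> clamp L t = t.
Proof. intros. unfold clamp, Rmax, Rmin. repeat destruct Rle_dec; lra. Qed.

Lemma clamp_lipschitz L s t : 0 <= L -> Rabs (clamp L s - clamp L t) <= Rabs (s - t).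
Proof.
  intros. unfold clamp, Rmax, Rmin.
  repeat destruct Rle_dec; unfold Rabs; repeat destruct Rcase_abs; lra.
Qed.

(* [clamp] extends [t |-> dist e (beta t)] continuously to all of R, as
   [continuity_ab_min] requires two-sided continuity at the endpoints. *)
Lemma geodesic_nearest_point (e : Z) (beta : R -> Z) L :
  is_geodesic beta L -> exists t0, 0 <= t0 <= L /\
    forall t, 0 <= t <= L -> dist e (beta t0) <= dist e (beta t).
Proof.
  intros [HL Hg].
  set (h := fun t => dist e (beta (clamp L t))).
  assert (Hc : forall c, continuity_pt h c).
  { intros c eps Heps. exists eps. split; [lra|].
    intros x [_ Hx]. simpl in *. unfold R_dist in *. unfold h.
    pose proof (Hg (clamp L x) (clamp L c) (clamp_in L x HL) (clamp_in L c HL)).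
    pose proof (clamp_lipschitz L x c HL).
    pose proof (dist_tri e (beta (clamp L c)) (beta (clamp L x))).
    pose proof (dist_tri e (beta (clamp L x)) (beta (clamp L c))).
    rewrite (dist_sym (beta (clamp L c)) (beta (clamp L x))) in *.
    unfold Rabs in *. repeat destruct Rcase_abs; lra. }
  destruct (continuity_ab_min h 0 L HL (fun c _ => Hc c)) as [m [Hm Hmin]].
  exists m. split; auto. intros t Ht. pose proof (Hm t Ht) as Hmt. unfold h in Hmt.
  rewrite !clamp_id in Hmt by auto. exact Hmt.
Qed.

Lemma geodesic_points_near_common_point (e x y : Z) ax ay s v p d1 d2 :
  geodesic_from_to ax e x -> geodesic_from_to ay e y ->
  0 <= s <= dist e x -> s <= dist e y -> 0 <= v <= dist e y ->
  dist (ax s) p <= d1 -> dist p (ay v) <= d2 -> dist (ax s) (ay s) <= 2 * (d1 + d2).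
Proof.
  intros Hax Hay Hs Hsy Hv H1 H2.
  pose proof (dist_start_geodesic ax e x s Hax Hs).
  pose proof (dist_start_geodesic ay e y v Hay Hv).
  pose proof (dist_tri (ax s) p (ay v)).
  pose proof (dist_tri e (ax s) (ay v)). pose proof (dist_tri e (ay v) (ax s)).
  pose proof (dist_tri (ax s) (ay v) (ay s)) as T.
  rewrite (dist_sym (ay v) (ax s)) in *.
  rewrite (geodesic_dist ay e y v s Hay Hv ltac:(lra)) in T.
  unfold Rabs in *. destruct Rcase_abs; lra.
Qed.

Lemma gromov_prod_sym (e x y : Z) : gromov_prod e x y = gromov_prod e y x.
Proof. unfold gromov_prod. rewrite (dist_sym x y). lra. Qed.

Lemma gromov_prod_nonneg (e x y : Z) : 0 <= gromov_prod e x y.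
Proof.
  unfold gromov_prod. pose proof (dist_tri x e y). rewrite (dist_sym x e) in *. lra.
Qed.

Lemma gromov_prod_le_dist (e x y : Z) : gromov_prod e x y <= dist e x.
Proof. unfold gromov_prod. pose proof (dist_tri e x y). lra. Qed.

Lemma gromov_prod_le_dist_geodesic (e x y : Z) g s :
  geodesic_from_to g x y -> 0 <= s <= dist x y -> gromov_prod e x y <= dist e (g s).
Proof.
  intros Hg Hs. unfold gromov_prod.
  pose proof (dist_start_geodesic g x y s Hg Hs). pose proof (dist_geodesic_end g x y s Hg Hs).
  pose proof (dist_tri e (g s) x). pose proof (dist_tri e (g s) y).
  rewrite (dist_sym (g s) x) in *. lra.
Qed.

Lemma gromov_prod_perturb (e a b b' : Z) :
  gromov_prod e a b - dist b b' <= gromov_prod e a b'.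
Proof.
  unfold gromov_prod. pose proof (dist_tri e b' b). pose proof (dist_tri a b b').
  rewrite (dist_sym b' b) in *. lra.
Qed.

Lemma gromov_prod_ge_geodesic_points (e x y : Z) gx gy s s' :
  geodesic_from_to gx e x -> geodesic_from_to gy e y ->
  0 <= s <= dist e x -> 0 <= s' <= dist e y ->
  (s + s' - dist (gx s) (gy s')) / 2 <= gromov_prod e x y.
Proof.
  intros Hx Hy Hs Hs'. unfold gromov_prod.
  pose proof (dist_geodesic_end gx e x s Hx Hs). pose proof (dist_geodesic_end gy e y s' Hy Hs').
  pose proof (dist_tri x (gx s) y). pose proof (dist_tri (gx s) (gy s') y).
  rewrite (dist_sym x (gx s)) in *. lra.
Qed.

End Geodesics.

Definition gauge_add (N1 N2 : MorseGauge) : MorseGauge := fun K C => N1 K C + N2 K C.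

Lemma gauge_add_is_gauge N1 N2 : is_gauge N1 -> is_gauge N2 -> is_gauge (gauge_add N1 N2).
Proof.
  intros H1 H2 K C HK HC. unfold gauge_add.
  pose proof (H1 K C HK HC). pose proof (H2 K C HK HC). lra.
Qed.

Section MorseGeometry.
Context {Z : MetricSpace}.

Lemma is_morse_mono (N N' : MorseGauge) (g : R -> Z) L :
  (forall K C, 1 <= K -> 0 <= C -> N K C <= N' K C) -> is_morse N g L -> is_morse N' g L.
Proof.
  intros Hle H K C s a b HK HC Hq Ha Hb t Ht.
  destruct (H K C s a b HK HC Hq Ha Hb t Ht) as [u [Hu Hd]].
  exists u. split; auto. pose proof (Hle K C HK HC). lra.
Qed.

Lemma morse_stratum_pt_mono (N N' : MorseGauge) (e y : Z) :
  (forall K C, 1 <= K -> 0 <= C -> N K C <= N' K C) ->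
  morse_stratum_pt N e y -> morse_stratum_pt N' e y.
Proof. intros Hle [g [Hg Hm]]. exists g. split; auto. eapply is_morse_mono; eauto. Qed.

Lemma morse_stratum_pt_addl N1 N2 (e y : Z) : is_gauge N2 ->
  morse_stratum_pt N1 e y -> morse_stratum_pt (gauge_add N1 N2) e y.
Proof.
  intros H2. apply morse_stratum_pt_mono. intros K C HK HC.
  unfold gauge_add. pose proof (H2 K C HK HC). lra.
Qed.

Lemma morse_stratum_pt_addr N1 N2 (e y : Z) : is_gauge N1 ->
  morse_stratum_pt N2 e y -> morse_stratum_pt (gauge_add N1 N2) e y.
Proof.
  intros H1. apply morse_stratum_pt_mono. intros K C HK HC.
  unfold gauge_add. pose proof (H1 K C HK HC). lra.
Qed.

(* The lower bound is where minimality of t0 enters: the distance from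
   e to beta t is at least dist e (beta t0). *)
Lemma nearest_point_dist_estimate (e x y : Z) (beta rho : R -> Z) (t0 s t : R) :
  geodesic_from_to beta y x -> 0 <= t0 <= dist y x ->
  (forall t, 0 <= t <= dist y x -> dist e (beta t0) <= dist e (beta t)) ->
  geodesic_from_to rho e (beta t0) ->
  0 <= s <= dist e (beta t0) -> t0 <= t <= dist y x ->
  (dist e (beta t0) - s + (t - t0)) / 3 <= dist (rho s) (beta t) <=
  dist e (beta t0) - s + (t - t0).
Proof.
  intros Hb Ht0 Hmin Hr Hs Ht.
  pose proof (dist_start_geodesic rho e (beta t0) s Hr Hs).
  pose proof (dist_geodesic_end rho e (beta t0) s Hr Hs).
  pose proof (geodesic_dist_le beta y x t0 t Hb ltac:(lra) ltac:(lra) ltac:(lra)).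
  pose proof (Hmin t ltac:(lra)).
  pose proof (dist_tri (rho s) (beta t0) (beta t)).
  pose proof (dist_tri e (rho s) (beta t)).
  pose proof (dist_tri (beta t0) (rho s) (beta t)).
  rewrite (dist_sym (beta t0) (rho s)) in *. lra.
Qed.

(* Follow a geodesic from e to a nearest point beta t0 of [y, x], then beta
   to x; minimality of t0 makes the concatenation a (3,0)-quasigeodesic. *)
Lemma nearest_point_path (e x y : Z) (beta rho : R -> Z) (t0 : R) :
  geodesic_from_to beta y x -> 0 <= t0 <= dist y x ->
  (forall t, 0 <= t <= dist y x -> dist e (beta t0) <= dist e (beta t)) ->
  geodesic_from_to rho e (beta t0) ->
  exists sig : R -> Z,
    is_quasigeodesic 3 0 sig 0 (dist e (beta t0) + (dist y x - t0)) /\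
    sig 0 = e /\ sig (dist e (beta t0) + (dist y x - t0)) = x /\
    (forall s, 0 <= s <= dist e (beta t0) -> sig s = rho s) /\
    (forall s, dist e (beta t0) < s <= dist e (beta t0) + (dist y x - t0) ->
        exists t, 0 <= t <= dist y x /\ sig s = beta t).
Proof.
  intros Hb Ht0 Hmin Hr.
  set (q := dist e (beta t0)).
  assert (Hq : 0 <= q) by apply dist_nonneg.
  set (sig := fun s => if Rle_dec s q then rho s else beta (t0 + (s - q))).
  assert (Hmix : forall s t, 0 <= s <= q -> t0 <= t <= dist y x ->
     (q - s + (t - t0)) / 3 <= dist (rho s) (beta t) <= q - s + (t - t0))
    by (intros; eapply nearest_point_dist_estimate; eauto).
  exists sig. split; [|split; [|split; [|split]]].
  - split; [lra|]. intros s s' Hs Hs'. unfold sig.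
    destruct (Rle_dec s q); destruct (Rle_dec s' q).
    + rewrite (geodesic_dist rho e (beta t0) s s' Hr) by (unfold q in *; lra).
      pose proof (Rabs_pos (s - s')). lra.
    + rewrite (Rabs_minus_le s s') by lra.
      pose proof (Hmix s (t0 + (s' - q)) ltac:(lra) ltac:(lra)). lra.
    + rewrite (Rabs_minus_ge s s') by lra. rewrite dist_sym.
      pose proof (Hmix s' (t0 + (s - q)) ltac:(lra) ltac:(lra)). lra.
    + rewrite (geodesic_dist beta y x _ _ Hb) by lra.
      replace (t0 + (s - q) - (t0 + (s' - q))) with (s - s') by ring.
      pose proof (Rabs_pos (s - s')). lra.
  - unfold sig. destruct Rle_dec; [|lra]. apply (proj1 (proj2 Hr)).
  - unfold sig. destruct Rle_dec as [Hle|Hgt].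
    + replace (q + (dist y x - t0)) with q by lra. unfold q. destruct Hr as [_ [_ ->]].
      replace t0 with (dist y x) by lra. apply (proj2 (proj2 Hb)).
    + replace (t0 + (q + (dist y x - t0) - q)) with (dist y x) by ring. apply (proj2 (proj2 Hb)).
  - intros s Hs. unfold sig. destruct Rle_dec; [auto|lra].
  - intros s Hs. unfold sig. destruct Rle_dec; [lra|].
    exists (t0 + (s - q)). split; [lra|auto].
Qed.

Lemma nearest_point_path_rev (e x y : Z) (beta rho : R -> Z) (t0 : R) :
  geodesic_from_to beta y x -> 0 <= t0 <= dist y x ->
  (forall t, 0 <= t <= dist y x -> dist e (beta t0) <= dist e (beta t)) ->
  geodesic_from_to rho e (beta t0) ->
  exists sig : R -> Z,
    is_quasigeodesic 3 0 sig 0 (dist e (beta t0) + t0) /\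
    sig 0 = e /\ sig (dist e (beta t0) + t0) = y /\
    (forall s, 0 <= s <= dist e (beta t0) -> sig s = rho s).
Proof.
  intros Hb Ht0 Hmin Hr.
  pose proof (geodesic_reverse beta y x Hb) as Hb'.
  assert (Heq : beta (dist y x - (dist x y - t0)) = beta t0).
  { f_equal. rewrite (dist_sym x y). ring. }
  assert (Ht0' : 0 <= dist x y - t0 <= dist x y) by (rewrite (dist_sym x y); lra).
  assert (Hmin' : forall t, 0 <= t <= dist x y ->
      dist e ((fun t => beta (dist y x - t)) (dist x y - t0)) <=
      dist e ((fun t => beta (dist y x - t)) t)).
  { intros t Ht. simpl. rewrite Heq. apply Hmin. rewrite (dist_sym x y) in Ht. lra. }
  assert (Hr' : geodesic_from_to rho e ((fun t => beta (dist y x - t)) (dist x y - t0))).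
  { simpl. rewrite Heq. auto. }
  destruct (nearest_point_path e y x _ rho _ Hb' Ht0' Hmin' Hr') as [sig [H1 [H2 [H3 [H4 _]]]]].
  simpl in *. rewrite Heq in *.
  replace (dist x y - (dist x y - t0)) with t0 in * by ring.
  exists sig. auto.
Qed.

Definition quasi_hausdorff_bound (N : MorseGauge) K C := 3 * N K C + K + C.

(* The quasigeodesic passes within N of [alpha 0, alpha u] at t1 and within
   N of a point beyond u at t2, with t1 and t2 at most 1 apart. *)
Lemma morse_geodesic_near_quasigeodesic (N : MorseGauge) (alpha sig : R -> Z) L K C a b :
  is_gauge N -> 1 <= K -> 0 <= C -> is_geodesic alpha L ->
  is_morse N alpha L -> is_quasigeodesic K C sig a b ->
  sig a = alpha 0 -> sig b = alpha L ->
  forall u, 0 <= u <= L ->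
    exists t, a <= t <= b /\ dist (alpha u) (sig t) <= quasi_hausdorff_bound N K C.
Proof.
  intros HN HK HC [HL Hg] Hm Hq Ha Hb u Hu. unfold quasi_hausdorff_bound.
  pose proof (HN K C HK HC) as HN0. set (N0 := N K C) in *.
  assert (Hmor : forall t, a <= t <= b ->
            exists v, 0 <= v <= L /\ dist (sig t) (alpha v) <= N0).
  { intros t Ht. apply (Hm K C sig a b HK HC Hq); auto.
    - exists 0. split; [lra|auto].
    - exists L. split; [lra|auto]. }
  assert (Hab : a <= b) by apply Hq.
  set (A := fun t => exists v, 0 <= v <= u /\ dist (sig t) (alpha v) <= N0).
  destruct (classic (A b)) as [[v [Hv Hd]]|HAb].
  { exists b. split; [lra|].
    rewrite Hb in *. rewrite Hg in * by lra.
    rewrite (Rabs_minus_ge L v) in Hd by lra. rewrite Rabs_minus_le by lra. lra. }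
  assert (HAa : A a) by (exists 0; split; [lra|]; rewrite Ha, dist_refl; lra).
  destruct (predicate_switch_within_one A a b Hab HAa HAb)
    as [t1 [t2 [Ht1 [Ht2 [H12 [[v1 [Hv1 Hd1]] HnA2]]]]]].
  destruct (Hmor t2 ltac:(lra)) as [v2 [Hv2 Hd2]].
  assert (Hv2u : u < v2).
  { apply Rnot_le_lt. intro Hle. apply HnA2. exists v2. split; [lra|auto]. }
  exists t1. split; [lra|].
  destruct Hq as [_ Hq].
  destruct (Hq t1 t2 ltac:(lra) ltac:(lra)) as [_ Hq12].
  rewrite Rabs_minus_le in Hq12 by lra.
  assert (K * (t2 - t1) <= K * 1) by (apply Rmult_le_compat_l; lra).
  pose proof (dist_tri (alpha v1) (sig t1) (alpha v2)) as T1.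
  pose proof (dist_tri (sig t1) (sig t2) (alpha v2)).
  pose proof (dist_tri (alpha u) (alpha v1) (sig t1)) as T2.
  rewrite (dist_sym (alpha v1) (sig t1)) in T1, T2.
  rewrite Hg in T1, T2 by lra.
  rewrite (Rabs_minus_le v1 v2) in T1 by lra. rewrite (Rabs_minus_ge u v1) in T2 by lra.
  lra.
Qed.

Lemma gromov_prod_ge_nearest_point (e x y : Z) N beta t0 :
  geodesic_space Z -> is_gauge N ->
  morse_stratum_pt N e x -> morse_stratum_pt N e y ->
  geodesic_from_to beta y x -> 0 <= t0 <= dist y x ->
  (forall t, 0 <= t <= dist y x -> dist e (beta t0) <= dist e (beta t)) ->
  dist e (beta t0) - 2 * N 3 0 <= gromov_prod e x y.
Proof.
  intros HZ HN [ax [Hax Hmx]] [ay [Hay Hmy]] Hb Ht0 Hmin.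
  destruct (HZ e (beta t0)) as [rho Hr].
  assert (Hq : 0 <= dist e (beta t0)) by apply dist_nonneg.
  pose proof (HN 3 0 ltac:(lra) ltac:(lra)) as HN0.
  destruct (nearest_point_path e x y beta rho t0 Hb Ht0 Hmin Hr) as [sx [Q1 [Q2 [Q3 [Q4 _]]]]].
  destruct (nearest_point_path_rev e x y beta rho t0 Hb Ht0 Hmin Hr) as [sy [R1 [R2 [R3 R4]]]].
  assert (Hrq : rho (dist e (beta t0)) = beta t0) by apply (proj2 (proj2 Hr)).
  destruct (Hmx 3 0 sx 0 _ ltac:(lra) ltac:(lra) Q1) with (t := dist e (beta t0)) as [v [Hv Hdv]].
  { rewrite Q2. apply (on_image_start ax e x Hax). }
  { rewrite Q3. apply (on_image_end ax e x Hax). }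
  { pose proof (dist_nonneg y x). lra. }
  destruct (Hmy 3 0 sy 0 _ ltac:(lra) ltac:(lra) R1) with (t := dist e (beta t0)) as [w [Hw Hdw]].
  { rewrite R2. apply (on_image_start ay e y Hay). }
  { rewrite R3. apply (on_image_end ay e y Hay). }
  { lra. }
  rewrite Q4, Hrq in Hdv by lra. rewrite R4, Hrq in Hdw by lra.
  pose proof (dist_start_geodesic ax e x v Hax Hv). pose proof (dist_geodesic_end ax e x v Hax Hv).
  pose proof (dist_start_geodesic ay e y w Hay Hw). pose proof (dist_geodesic_end ay e y w Hay Hw).
  pose proof (dist_start_geodesic beta y x t0 Hb Ht0). pose proof (dist_geodesic_end beta y x t0 Hb Ht0).
  pose proof (dist_tri e (ax v) (beta t0)). pose proof (dist_tri (beta t0) (ax v) x).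
  pose proof (dist_tri e (ay w) (beta t0)). pose proof (dist_tri (beta t0) (ay w) y).
  rewrite (dist_sym (ax v) (beta t0)), (dist_sym (ay w) (beta t0)), (dist_sym y (beta t0)) in *.
  unfold gromov_prod. rewrite (dist_sym x y). lra.
Qed.

Definition fellow_shift (N : MorseGauge) := 3 * N 3 0 + 3 + 1.
Definition fellow_bound (N : MorseGauge) := 2 * (3 * N 3 0 + 3 + N 3 0).
Definition morse_hyperbolicity (N : MorseGauge) := fellow_shift N + fellow_bound N.

Lemma morse_hyperbolicity_nonneg N : is_gauge N -> 0 <= morse_hyperbolicity N.
Proof.
  intros HN. pose proof (HN 3 0 ltac:(lra) ltac:(lra)).
  unfold morse_hyperbolicity, fellow_shift, fellow_bound. lra.
Qed.

(* Both geodesics stay close to the two (3,0)-quasigeodesics through the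
   nearest point of [y, x] to e, which share their initial segment. *)
Lemma morse_geodesics_fellow_travel (e x y : Z) N ax ay s :
  geodesic_space Z -> is_gauge N ->
  geodesic_from_to ax e x -> is_morse N ax (dist e x) ->
  geodesic_from_to ay e y -> is_morse N ay (dist e y) ->
  0 <= s -> s <= gromov_prod e x y - fellow_shift N ->
  dist (ax s) (ay s) <= fellow_bound N.
Proof.
  intros HZ HN Hax Hmx Hay Hmy Hs Hsg. unfold fellow_shift, fellow_bound in *.
  pose proof (HN 3 0 ltac:(lra) ltac:(lra)) as HN0.
  destruct (HZ y x) as [beta Hb].
  destruct (geodesic_nearest_point e beta (dist y x) (geodesic_from_to_geodesic beta y x Hb))
    as [t0 [Ht0 Hmin]].
  destruct (HZ e (beta t0)) as [rho Hr].
  assert (Hq : 0 <= dist e (beta t0)) by apply dist_nonneg.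
  destruct (nearest_point_path e x y beta rho t0 Hb Ht0 Hmin Hr) as [sx [Q1 [Q2 [Q3 [Q4 Q5]]]]].
  destruct (nearest_point_path_rev e x y beta rho t0 Hb Ht0 Hmin Hr) as [sy [R1 [R2 [R3 R4]]]].
  assert (Hgp : gromov_prod e x y <= dist e (beta t0)).
  { rewrite gromov_prod_sym. apply (gromov_prod_le_dist_geodesic e y x beta t0 Hb Ht0). }
  pose proof (gromov_prod_le_dist e x y).
  pose proof (gromov_prod_le_dist e y x) as Hyx. rewrite gromov_prod_sym in Hyx.
  destruct (morse_geodesic_near_quasigeodesic N ax sx (dist e x) 3 0 0 (dist e (beta t0) + (dist y x - t0)) HN
    ltac:(lra) ltac:(lra) (geodesic_from_to_geodesic ax e x Hax) Hmx Q1) with (u := s)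
    as [t [Ht Hd]]; unfold quasi_hausdorff_bound in *.
  { rewrite Q2. symmetry. apply Hax. }
  { rewrite Q3. symmetry. apply Hax. }
  { lra. }
  assert (Htq : t <= dist e (beta t0)).
  { apply Rnot_lt_le. intro Hlt. destruct (Q5 t ltac:(lra)) as [tau [Htau Hst]].
    pose proof (Hmin tau Htau). pose proof (dist_start_geodesic ax e x s Hax ltac:(lra)).
    pose proof (dist_tri e (ax s) (sx t)) as Htr. rewrite Hst in Htr, Hd. lra. }
  rewrite Q4 in Hd by lra.
  destruct (Hmy 3 0 sy 0 _ ltac:(lra) ltac:(lra) R1) with (t := t) as [v [Hv Hdv]].
  { rewrite R2. apply (on_image_start ay e y Hay). }
  { rewrite R3. apply (on_image_end ay e y Hay). }
  { lra. }
  rewrite R4 in Hdv by lra.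
  pose proof (geodesic_points_near_common_point e x y ax ay s v (rho t) _ _ Hax Hay
    ltac:(lra) ltac:(lra) Hv Hd Hdv).
  lra.
Qed.

Definition four_point_condition (e : Z) (P : Z -> Prop) (d : R) :=
  forall x y z, P x -> P y -> P z ->
    Rmin (gromov_prod e x y) (gromov_prod e y z) - d <= gromov_prod e x z.

Lemma morse_stratum_four_point N (e : Z) : geodesic_space Z -> is_gauge N ->
  four_point_condition e (morse_stratum_pt N e) (morse_hyperbolicity N).
Proof.
  intros HZ HN x y z [ax [Hax Hmx]] [ay [Hay Hmy]] [az [Haz Hmz]].
  pose proof (HN 3 0 ltac:(lra) ltac:(lra)).
  pose proof (gromov_prod_nonneg e x z).
  set (m := Rmin (gromov_prod e x y) (gromov_prod e y z)).
  assert (Hm1 : m <= gromov_prod e x y) by apply Rmin_l.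
  assert (Hm2 : m <= gromov_prod e y z) by apply Rmin_r.
  unfold morse_hyperbolicity.
  destruct (Rlt_or_le (m - fellow_shift N) 0) as [Hlt|Hge].
  { unfold fellow_bound. lra. }
  set (s := m - fellow_shift N).
  assert (Hs : 0 <= s) by (unfold s; lra).
  pose proof (morse_geodesics_fellow_travel e y x N ay ax s HZ HN Hay Hmy Hax Hmx Hs
       ltac:(unfold s; rewrite gromov_prod_sym; lra)) as F1.
  pose proof (morse_geodesics_fellow_travel e y z N ay az s HZ HN Hay Hmy Haz Hmz Hs
       ltac:(unfold s; lra)) as F2.
  pose proof (gromov_prod_le_dist e x y). pose proof (gromov_prod_le_dist e z y).
  rewrite (gromov_prod_sym e z y) in *.
  assert (Hsx : s <= dist e x) by (unfold s, fellow_shift in *; lra).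
  assert (Hsz : s <= dist e z) by (unfold s, fellow_shift in *; lra).
  pose proof (gromov_prod_ge_geodesic_points e x z ax az s s Hax Haz ltac:(lra) ltac:(lra)).
  pose proof (dist_tri (ax s) (ay s) (az s)). rewrite (dist_sym (ax s) (ay s)) in *.
  unfold s in *. lra.
Qed.

End MorseGeometry.

Section BoundaryEquivalence.
Context {Z : MetricSpace}.

Lemma bequiv_sym (e : Z) u v : bequiv e u v -> bequiv e v u.
Proof.
  intros H M. destruct (H M) as [n0 Hn]. exists n0. intros i j Hi Hj.
  rewrite gromov_prod_sym. auto.
Qed.

Lemma bequiv_trans (e : Z) P d a b c : four_point_condition e P d ->
  (forall n, P (a n)) -> (forall n, P (b n)) -> (forall n, P (c n)) ->
  bequiv e a b -> bequiv e b c -> bequiv e a c.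
Proof.
  intros H4 Pa Pb Pc Hab Hbc M.
  destruct (Hab (M + d)) as [n1 H1]. destruct (Hbc (M + d)) as [n2 H2].
  exists (Nat.max n1 n2). intros i k Hi Hk.
  pose proof (H4 _ _ _ (Pa i) (Pb (Nat.max n1 n2)) (Pc k)).
  pose proof (H1 i (Nat.max n1 n2) ltac:(lia) ltac:(lia)).
  pose proof (H2 (Nat.max n1 n2) k ltac:(lia) ltac:(lia)).
  pose proof (Rmin_glb _ _ _ H0 H3). lra.
Qed.

Lemma liminf_ge_weaken (e : Z) a b r r' : r' <= r -> liminf_ge e a b r -> liminf_ge e a b r'.
Proof.
  intros Hr H eps Heps. destruct (H eps Heps) as [n0 Hn]. exists n0. intros i j Hi Hj.
  pose proof (Hn i j Hi Hj). lra.
Qed.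

Lemma liminf_ge_bequiv (e : Z) P d a b c c' r : four_point_condition e P d -> 0 <= d ->
  (forall n, P (a n)) -> (forall n, P (b n)) -> (forall n, P (c n)) -> (forall n, P (c' n)) ->
  bequiv e a b -> liminf_ge e b c r -> bequiv e c c' -> liminf_ge e a c' (r - 2 * d).
Proof.
  intros H4 Hd0 Pa Pb Pc Pc' Hab Hbc Hcc' eps Heps.
  destruct (Hab r) as [n1 H1]. destruct (Hbc eps Heps) as [n2 H2]. destruct (Hcc' r) as [n3 H3].
  set (m := Nat.max n1 (Nat.max n2 n3)).
  exists m. intros i l Hi Hl.
  pose proof (H1 i m ltac:(unfold m; lia) ltac:(unfold m; lia)) as E1.
  pose proof (H2 m m ltac:(unfold m; lia) ltac:(unfold m; lia)) as E2.
  pose proof (H3 m l ltac:(unfold m; lia) ltac:(unfold m; lia)) as E3.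
  pose proof (H4 _ _ _ (Pa i) (Pb m) (Pc m)) as F1.
  pose proof (Rmin_glb (gromov_prod e (a i) (b m)) (gromov_prod e (b m) (c m)) (r - eps)
    ltac:(lra) E2).
  pose proof (H4 _ _ _ (Pa i) (Pc m) (Pc' l)) as F2.
  pose proof (Rmin_glb (gromov_prod e (a i) (c m)) (gromov_prod e (c m) (c' l)) (r - eps - d)
    ltac:(lra) ltac:(lra)).
  lra.
Qed.

Lemma bequiv_perturb (e : Z) u v v' D :
  (forall j, dist (v j) (v' j) <= D) -> bequiv e u v -> bequiv e u v'.
Proof.
  intros HD H M. destruct (H (M + D)) as [n0 Hn]. exists n0. intros i j Hi Hj.
  pose proof (Hn i j Hi Hj). pose proof (gromov_prod_perturb e (u i) (v j) (v' j)).
  pose proof (HD j). lra.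
Qed.

Lemma MB_seq_conv_at_inf (e : Z) u : MB_seq e u -> conv_at_inf e u.
Proof. intros [_ [_ [_ H]]]. exact H. Qed.

End BoundaryEquivalence.

Lemma bequiv_transfer {Z W : MetricSpace} (e : Z) (e' : W) u v u' v' K B : 0 < K ->
  (forall i j, gromov_prod e (u i) (v j) / K - B <= gromov_prod e' (u' i) (v' j)) ->
  bequiv e u v -> bequiv e' u' v'.
Proof.
  intros HK Hlin H M. destruct (H (K * (M + B))) as [n0 Hn]. exists n0. intros i j Hi Hj.
  pose proof (Rdiv_le_compat_r _ _ K HK (Hn i j Hi Hj)) as Hd.
  replace (K * (M + B) / K) with (M + B) in Hd by (field; lra).
  pose proof (Hlin i j). lra.
Qed.

Lemma liminf_ge_transfer {Z W : MetricSpace} (e : Z) (e' : W) u v u' v' K B r : 0 < K ->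
  (forall i j, gromov_prod e (u i) (v j) / K - B <= gromov_prod e' (u' i) (v' j)) ->
  liminf_ge e u v r -> liminf_ge e' u' v' (r / K - B).
Proof.
  intros HK Hlin H eps Heps. destruct (H (K * eps) ltac:(nra)) as [n0 Hn]. exists n0.
  intros i j Hi Hj.
  pose proof (Rdiv_le_compat_r _ _ K HK (Hn i j Hi Hj)) as Hd.
  replace ((r - K * eps) / K) with (r / K - eps) in Hd by (field; lra).
  pose proof (Hlin i j). lra.
Qed.

Definition pullback_gauge (N : MorseGauge) K C : MorseGauge :=
  fun K' C' => K * (N (K * K') (K * C' + C) + quasi_hausdorff_bound N K C + C).

Definition gp_lower_loss (N : MorseGauge) K C :=
  C + quasi_hausdorff_bound N K C + 2 * N 3 0.

Definition gp_upper_loss (N : MorseGauge) K C :=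
  (fellow_shift N + quasi_hausdorff_bound N K C + C) / K
  + K * (fellow_bound N + 2 * quasi_hausdorff_bound N K C + C) / 2.

Section StableEmbedding.
Variables (X Y : MetricSpace) (f : X -> Y) (K C : R) (N : MorseGauge).
Hypothesis HX : geodesic_space X.
Hypothesis HY : geodesic_space Y.
Hypothesis HK : 1 <= K.
Hypothesis HC : 0 <= C.
Hypothesis Hqi : forall x x', dist x x' / K - C <= dist (f x) (f x') <= K * dist x x' + C.
Hypothesis HN : is_gauge N.
Hypothesis Hstable : forall x x', exists g,
  geodesic_from_to g (f x) (f x') /\ is_morse N g (dist (f x) (f x')).

Lemma image_morse_stratum_pt x x' : morse_stratum_pt N (f x) (f x').
Proof. apply Hstable. Qed.

Lemma image_geodesic_quasigeodesic (g : R -> X) x y :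
  geodesic_from_to g x y -> is_quasigeodesic K C (fun t => f (g t)) 0 (dist x y).
Proof.
  intros Hg. split; [apply dist_nonneg|].
  intros t t' Ht Ht'. rewrite <- (geodesic_dist g x y t t' Hg Ht Ht'). apply Hqi.
Qed.

Lemma image_quasigeodesic (s : R -> X) K' C' a b : 1 <= K' -> 0 <= C' ->
  is_quasigeodesic K' C' s a b -> is_quasigeodesic (K * K') (K * C' + C) (fun t => f (s t)) a b.
Proof.
  intros HK' HC' [Hab Hs]. split; auto.
  intros t t' Ht Ht'. destruct (Hs t t' Ht Ht') as [L1 L2]. destruct (Hqi (s t) (s t')) as [Q1 Q2].
  pose proof (Rabs_pos (t - t')). split.
  - assert (Hlow : Rabs (t - t') / K' - C' <= dist (s t) (s t')) by lra.
    apply (Rdiv_le_compat_r _ _ K ltac:(lra)) in Hlow.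
    replace ((Rabs (t - t') / K' - C') / K) with (Rabs (t - t') / (K * K') - C' / K) in Hlow
      by (field; lra).
    assert (C' / K <= K * C').
    { apply Rdiv_le_of_le_mult; [lra|]. assert (1 <= K * K) by nra. nra. }
    lra.
  - assert (K * dist (s t) (s t') <= K * (K' * Rabs (t - t') + C'))
      by (apply Rmult_le_compat_l; lra).
    lra.
Qed.

Lemma image_geodesic_near_morse (g : R -> X) x y (beta : R -> Y) u :
  geodesic_from_to g x y -> geodesic_from_to beta (f x) (f y) ->
  is_morse N beta (dist (f x) (f y)) -> 0 <= u <= dist (f x) (f y) ->
  exists t, 0 <= t <= dist x y /\ dist (beta u) (f (g t)) <= quasi_hausdorff_bound N K C.
Proof.
  intros Hg Hb Hm Hu.
  apply (morse_geodesic_near_quasigeodesic N beta (fun t => f (g t)) _ K C 0 (dist x y) HN HK HC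
    (geodesic_from_to_geodesic beta _ _ Hb) Hm (image_geodesic_quasigeodesic g x y Hg)); auto.
  - simpl. rewrite (proj1 (proj2 Hg)). symmetry. apply Hb.
  - simpl. rewrite (proj2 (proj2 Hg)). symmetry. apply Hb.
Qed.

Lemma pullback_gauge_is_gauge : is_gauge (pullback_gauge N K C).
Proof.
  intros K' C' HK' HC'. unfold pullback_gauge, quasi_hausdorff_bound.
  pose proof (HN (K * K') (K * C' + C) ltac:(nra) ltac:(nra)). pose proof (HN K C HK HC).
  apply Rmult_le_pos; lra.
Qed.

(* A quasigeodesic s with endpoints on g is sent near the N-Morse geodesic
   joining the images of its endpoints, which stays near the image of the
   subsegment of g between them. *)
Lemma geodesic_morse_pullback (g : R -> X) x y :
  geodesic_from_to g x y -> is_morse (pullback_gauge N K C) g (dist x y).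
Proof.
  intros Hg K' C' s a b HK' HC' Hqs [u1 [Hu1 Ha]] [u2 [Hu2 Hb]] t Ht.
  destruct (geodesic_subsegment g x y u1 u2 Hg Hu1 Hu2) as [z [Hz Hzin]].
  destruct (Hstable (g u1) (g u2)) as [beta [Hb' Hbm]].
  destruct (Hbm (K * K') (K * C' + C) (fun t => f (s t)) a b ltac:(nra) ltac:(nra)
    (image_quasigeodesic s K' C' a b HK' HC' Hqs)) with (t := t) as [v [Hv Hdv]].
  { simpl. rewrite Ha. apply (on_image_start beta _ _ Hb'). }
  { simpl. rewrite Hb. apply (on_image_end beta _ _ Hb'). }
  { exact Ht. }
  destruct (image_geodesic_near_morse z _ _ beta v Hz Hb' Hbm Hv) as [tau [Htau Hd]].
  destruct (Hzin tau Htau) as [w [Hw Hzw]]. rewrite Hzw in Hd.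
  exists w. split; auto.
  destruct (Hqi (s t) (g w)) as [Q _].
  pose proof (dist_tri (f (s t)) (beta v) (f (g w))).
  assert (Hfar : dist (s t) (g w) <= K * (dist (f (s t)) (f (g w)) + C))
    by (apply Rle_mult_of_div_le; lra).
  assert (K * (dist (f (s t)) (f (g w)) + C) <=
          K * (N (K * K') (K * C' + C) + quasi_hausdorff_bound N K C + C))
    by (apply Rmult_le_compat_l; lra).
  unfold pullback_gauge. lra.
Qed.

Lemma morse_stratum_pt_pullback (e x : X) : morse_stratum_pt (pullback_gauge N K C) e x.
Proof.
  destruct (HX e x) as [g Hg]. exists g. split; auto. apply geodesic_morse_pullback; auto.
Qed.

(* The nearest point of an N-Morse geodesic [f y, f x] to f e is within
   2 N(3,0) of the Gromov product, and it lies near the image of [y, x]. *)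
Lemma gromov_prod_image_lower e x y :
  gromov_prod e x y / K - gp_lower_loss N K C <= gromov_prod (f e) (f x) (f y).
Proof.
  destruct (Hstable y x) as [beta [Hb Hbm]].
  destruct (geodesic_nearest_point (f e) beta _ (geodesic_from_to_geodesic beta _ _ Hb))
    as [t0 [Ht0 Hmin]].
  pose proof (gromov_prod_ge_nearest_point (f e) (f x) (f y) N beta t0 HY HN
    (image_morse_stratum_pt e x) (image_morse_stratum_pt e y) Hb Ht0 Hmin) as T.
  destruct (HX y x) as [g Hg].
  destruct (image_geodesic_near_morse g y x beta t0 Hg Hb Hbm Ht0) as [t [Ht Hd]].
  pose proof (gromov_prod_le_dist_geodesic e y x g t Hg Ht) as G. rewrite gromov_prod_sym in G.
  destruct (Hqi e (g t)) as [Q _].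
  pose proof (Rdiv_le_compat_r _ _ K ltac:(lra) G).
  pose proof (dist_tri (f e) (beta t0) (f (g t))).
  unfold gp_lower_loss. lra.
Qed.

Lemma image_geodesic_time_ge (g : R -> X) (a : R -> Y) e z t s D :
  geodesic_from_to g e z -> 0 <= t <= dist e z ->
  geodesic_from_to a (f e) (f z) -> 0 <= s <= dist (f e) (f z) ->
  dist (a s) (f (g t)) <= D -> (s - D - C) / K <= t.
Proof.
  intros Hg Ht Ha Hs Hd. apply Rdiv_le_of_le_mult; [lra|].
  pose proof (dist_start_geodesic a _ _ s Ha Hs).
  pose proof (dist_tri (f e) (f (g t)) (a s)).
  rewrite (dist_sym (f (g t)) (a s)) in *.
  destruct (Hqi e (g t)) as [_ Q]. rewrite (dist_start_geodesic g e z t Hg Ht) in Q. lra.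
Qed.

(* Points at distance s < (f x . f y) - fellow_shift N along the two Morse
   geodesics from f e are close, and each is near the image of a point of the
   corresponding geodesic of X at distance about s / K from e. *)
Lemma gromov_prod_image_upper e x y :
  gromov_prod (f e) (f x) (f y) / K - gp_upper_loss N K C <= gromov_prod e x y.
Proof.
  set (R0 := quasi_hausdorff_bound N K C).
  assert (HR0 : 0 <= R0).
  { pose proof (HN K C HK HC). unfold R0, quasi_hausdorff_bound. lra. }
  assert (HN3 : 0 <= N 3 0) by (apply HN; lra).
  set (B := K * (fellow_bound N + 2 * R0 + C) / 2).
  assert (HB : 0 <= B).
  { unfold B, fellow_bound. apply Rmult_le_pos; [|lra]. apply Rmult_le_pos; lra. }
  replace (gromov_prod (f e) (f x) (f y) / K - gp_upper_loss N K C)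
    with ((gromov_prod (f e) (f x) (f y) - fellow_shift N - R0 - C) / K - B)
    by (unfold gp_upper_loss, B, R0; field; lra).
  pose proof (gromov_prod_nonneg e x y).
  set (s := gromov_prod (f e) (f x) (f y) - fellow_shift N).
  destruct (Rlt_or_le s 0) as [Hs|Hs].
  { assert ((s - R0 - C) / K <= 0).
    { rewrite <- (Rdiv_0_l K). apply Rdiv_le_compat_r; lra. }
    lra. }
  destruct (Hstable e x) as [ax [Hax Hmx]]. destruct (Hstable e y) as [ay [Hay Hmy]].
  pose proof (gromov_prod_le_dist (f e) (f x) (f y)).
  pose proof (gromov_prod_le_dist (f e) (f y) (f x)) as Hyx. rewrite gromov_prod_sym in Hyx.
  assert (Hsx : 0 <= s <= dist (f e) (f x)) by (unfold s, fellow_shift in *; lra).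
  assert (Hsy : 0 <= s <= dist (f e) (f y)) by (unfold s, fellow_shift in *; lra).
  pose proof (morse_geodesics_fellow_travel (f e) (f x) (f y) N ax ay s HY HN Hax Hmx Hay Hmy
    ltac:(lra) ltac:(unfold s; lra)) as F.
  destruct (HX e x) as [gx Hgx]. destruct (HX e y) as [gy Hgy].
  destruct (image_geodesic_near_morse gx e x ax s Hgx Hax Hmx Hsx) as [t1 [Ht1 Hd1]].
  destruct (image_geodesic_near_morse gy e y ay s Hgy Hay Hmy Hsy) as [t2 [Ht2 Hd2]].
  fold R0 in Hd1, Hd2.
  assert (Hclose : dist (gx t1) (gy t2) <= K * (fellow_bound N + 2 * R0 + C)).
  { destruct (Hqi (gx t1) (gy t2)) as [Q _].
    pose proof (dist_tri (f (gx t1)) (ax s) (f (gy t2))).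
    pose proof (dist_tri (ax s) (ay s) (f (gy t2))).
    rewrite (dist_sym (f (gx t1)) (ax s)) in *.
    apply Rle_mult_of_div_le; lra. }
  pose proof (image_geodesic_time_ge gx ax e x t1 s R0 Hgx Ht1 Hax Hsx Hd1).
  pose proof (image_geodesic_time_ge gy ay e y t2 s R0 Hgy Ht2 Hay Hsy Hd2).
  pose proof (gromov_prod_ge_geodesic_points e x y gx gy t1 t2 Hgx Hgy Ht1 Ht2).
  unfold B. lra.
Qed.

Variable e : X.

Lemma bequiv_image u v : bequiv e u v -> bequiv (f e) (seqmap f u) (seqmap f v).
Proof.
  apply (bequiv_transfer _ _ _ _ _ _ K (gp_lower_loss N K C)); [lra|].
  intros i j. apply gromov_prod_image_lower.
Qed.

Lemma liminf_ge_image u v r : liminf_ge e u v r ->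
  liminf_ge (f e) (seqmap f u) (seqmap f v) (r / K - gp_lower_loss N K C).
Proof.
  apply liminf_ge_transfer; [lra|]. intros i j. apply gromov_prod_image_lower.
Qed.

Lemma bequiv_of_image u v : bequiv (f e) (seqmap f u) (seqmap f v) -> bequiv e u v.
Proof.
  apply (bequiv_transfer _ _ _ _ _ _ K (gp_upper_loss N K C)); [lra|].
  intros i j. apply gromov_prod_image_upper.
Qed.

Lemma liminf_ge_of_image u v r : liminf_ge (f e) (seqmap f u) (seqmap f v) r ->
  liminf_ge e u v (r / K - gp_upper_loss N K C).
Proof.
  apply liminf_ge_transfer; [lra|]. intros i j. apply gromov_prod_image_upper.
Qed.

Lemma stratum_seq_image u : conv_at_inf e u -> stratum_seq N (f e) (seqmap f u).
Proof. intros Hc. split; [intros n; apply image_morse_stratum_pt | apply bequiv_image, Hc]. Qed.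

Lemma MB_seq_image u : MB_seq e u -> MB_seq (f e) (seqmap f u).
Proof.
  intros Hu. exists N. split; [exact HN|].
  apply stratum_seq_image, MB_seq_conv_at_inf, Hu.
Qed.

Lemma stratum_seq_pullback u : conv_at_inf e u -> stratum_seq (pullback_gauge N K C) e u.
Proof. intros Hc. split; [intros n; apply morse_stratum_pt_pullback | exact Hc]. Qed.

Lemma MB_seq_of_image u : conv_at_inf (f e) (seqmap f u) -> MB_seq e u.
Proof.
  intros Hc. exists (pullback_gauge N K C). split; [apply pullback_gauge_is_gauge|].
  apply stratum_seq_pullback, bequiv_of_image, Hc.
Qed.

Lemma boundary_map_continuous U : MB_open (f e) U -> MB_open e (fun u => U (seqmap f u)).
Proof.
  intros [Usat Uopen]. split.
  { intros u v Hu Hv Huv. apply Usat; auto using MB_seq_image, bequiv_image. }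
  intros N0 _ u [_ Huc] HUu.
  destruct (Uopen N HN (seqmap f u) (stratum_seq_image u Huc) HUu) as [r Hr].
  exists (K * (r + gp_lower_loss N K C)).
  intros v [_ Hvc] [u' [v' [[_ Hu'c] [[_ Hv'c] [Huu' [Hvv' Hlim]]]]]].
  apply Hr; [apply stratum_seq_image, Hvc|].
  exists (seqmap f u'), (seqmap f v').
  split; [apply stratum_seq_image, Hu'c|]. split; [apply stratum_seq_image, Hv'c|].
  split; [apply bequiv_image, Huu'|]. split; [apply bequiv_image, Hvv'|].
  eapply liminf_ge_weaken; [|apply liminf_ge_image, Hlim].
  right. field. lra.
Qed.

Lemma image_morse_stratum_pt_add M x : is_gauge M ->
  morse_stratum_pt (gauge_add M N) (f e) (f x).
Proof. intros HM. apply morse_stratum_pt_addr; [exact HM | apply image_morse_stratum_pt]. Qed.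

Definition boundary_pushforward (V : (nat -> X) -> Prop) (w : nat -> Y) : Prop :=
  MB_seq (f e) w /\ forall u, MB_seq e u -> bequiv (f e) w (seqmap f u) -> V u.

Lemma boundary_pushforward_saturated V : MB_saturated (f e) (boundary_pushforward V).
Proof.
  intros w w' Hw Hw' Hww' [_ HU]. split; auto. intros u Hu Hw'u. apply HU; auto.
  destruct Hw as [Nw [HNw [Hws _]]]. destruct Hw' as [Nw' [HNw' [Hw's _]]].
  set (M := gauge_add Nw Nw').
  assert (HM : is_gauge M) by (apply gauge_add_is_gauge; auto).
  apply (bequiv_trans (f e) _ _ w w' (seqmap f u)
    (morse_stratum_four_point _ (f e) HY (gauge_add_is_gauge _ _ HM HN))); auto.
  - intros n. apply morse_stratum_pt_addl, morse_stratum_pt_addl; auto.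
  - intros n. apply morse_stratum_pt_addl, morse_stratum_pt_addr; auto.
  - intros n. apply image_morse_stratum_pt_add, HM.
Qed.

Section MixedStratum.
Variable M : MorseGauge.
Hypothesis HM : is_gauge M.

Let delta := morse_hyperbolicity (gauge_add M N).

Let delta_nonneg : 0 <= delta :=
  morse_hyperbolicity_nonneg _ (gauge_add_is_gauge _ _ HM HN).

Let four_point : four_point_condition (f e) (morse_stratum_pt (gauge_add M N) (f e)) delta :=
  morse_stratum_four_point _ (f e) HY (gauge_add_is_gauge _ _ HM HN).

Let stratum_add (w : nat -> Y) (Hw : forall n, morse_stratum_pt M (f e) (w n)) n :
  morse_stratum_pt (gauge_add M N) (f e) (w n) := morse_stratum_pt_addl _ _ _ _ HN (Hw n).

Let image_add (u : nat -> X) n : morse_stratum_pt (gauge_add M N) (f e) (seqmap f u n) :=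
  image_morse_stratum_pt_add M (u n) HM.

Lemma boundary_pushforward_open_at_image V w u0 : MB_open e V ->
  stratum_seq M (f e) w -> MB_seq e u0 -> bequiv (f e) w (seqmap f u0) -> V u0 ->
  exists r, forall v, stratum_seq M (f e) v -> stratum_nbhd M (f e) w r v ->
    boundary_pushforward V v.
Proof.
  intros [_ Vopen] [Hws _] Hu0 Hwu0 HV0.
  pose proof (MB_seq_conv_at_inf e u0 Hu0) as Hu0c.
  destruct (Vopen _ pullback_gauge_is_gauge u0 (stratum_seq_pullback u0 Hu0c) HV0) as [r0 Hr0].
  exists (K * (r0 + gp_upper_loss N K C) + 2 * delta).
  intros v [Hvs Hvc] [w' [v' [[Hw's _] [[Hv's _] [Hww' [Hvv' Hlim]]]]]].
  split; [exists M; split; [exact HM | split; auto]|].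
  intros u Hu Hvu. pose proof (MB_seq_conv_at_inf e u Hu) as Huc.
  apply Hr0; [apply stratum_seq_pullback, Huc|].
  exists u0, u.
  split; [apply stratum_seq_pullback, Hu0c|]. split; [apply stratum_seq_pullback, Huc|].
  split; [exact Hu0c|]. split; [exact Huc|].
  assert (B1 : bequiv (f e) (seqmap f u0) w').
  { apply (bequiv_trans (f e) _ _ _ w _ four_point); auto.
    apply bequiv_sym; auto. }
  assert (B2 : bequiv (f e) v' (seqmap f u)).
  { apply (bequiv_trans (f e) _ _ _ v _ four_point); auto.
    apply bequiv_sym; auto. }
  pose proof (liminf_ge_bequiv (f e) _ _ _ _ _ _ _ four_point delta_nonneg
    (image_add u0) (stratum_add w' Hw's) (stratum_add v' Hv's) (image_add u) B1 Hlim B2) as L.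
  eapply liminf_ge_weaken; [|apply liminf_ge_of_image, L].
  right. unfold delta. field. lra.
Qed.

Lemma nbhd_image_point w v u r :
  stratum_seq M (f e) w -> stratum_seq M (f e) v -> stratum_nbhd M (f e) w r v ->
  bequiv (f e) v (seqmap f u) ->
  exists x k0, forall k, (k0 <= k)%nat -> r - 1 - 2 * delta <= gromov_prod (f e) (w k) (f x).
Proof.
  intros [Hws _] [Hvs _] [w' [v' [[Hw's _] [[Hv's _] [Hww' [Hvv' Hlim]]]]]] Hvu.
  assert (B : bequiv (f e) v' (seqmap f u)).
  { apply (bequiv_trans (f e) _ _ _ v _ four_point); auto.
    apply bequiv_sym; auto. }
  destruct (Hww' r) as [a1 A1]. destruct (Hlim 1 ltac:(lra)) as [a2 A2].
  destruct (B r) as [a3 A3].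
  set (l := Nat.max a1 (Nat.max a2 a3)).
  exists (u l), a1. intros k Hk.
  pose proof (A1 k l Hk ltac:(unfold l; lia)).
  pose proof (A2 l l ltac:(unfold l; lia) ltac:(unfold l; lia)).
  pose proof (A3 l l ltac:(unfold l; lia) ltac:(unfold l; lia)).
  pose proof (four_point _ _ _ (stratum_add w' Hw's l) (stratum_add v' Hv's l) (image_add u l)).
  pose proof (four_point _ _ _ (stratum_add w Hws k) (stratum_add w' Hw's l) (image_add u l)).
  unfold seqmap in *. pose proof delta_nonneg.
  pose proof (Rmin_glb (gromov_prod (f e) (w' l) (v' l)) (gromov_prod (f e) (v' l) (f (u l)))
    (r - 1) ltac:(lra) ltac:(lra)).
  pose proof (Rmin_glb (gromov_prod (f e) (w k) (w' l)) (gromov_prod (f e) (w' l) (f (u l)))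
    (r - 1 - delta) ltac:(lra) ltac:(lra)).
  lra.
Qed.

Lemma image_sequence_bequiv w xs ks c : stratum_seq M (f e) w ->
  (forall n k, (ks n <= k)%nat -> INR n - c <= gromov_prod (f e) (w k) (f (xs n))) ->
  MB_seq e xs /\ bequiv (f e) w (seqmap f xs).
Proof.
  intros [Hws _] Hxs.
  assert (Hfx : conv_at_inf (f e) (seqmap f xs)).
  { intros M0. destruct (INR_unbounded (M0 + c + delta)) as [m Hm].
    exists m. intros i j Hi Hj. set (k := Nat.max (ks i) (ks j)).
    pose proof (Hxs i k ltac:(unfold k; lia)) as E1. rewrite gromov_prod_sym in E1.
    pose proof (Hxs j k ltac:(unfold k; lia)) as E2.
    pose proof (four_point _ _ _ (image_add xs i) (stratum_add w Hws k) (image_add xs j)).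
    pose proof (le_INR _ _ Hi). pose proof (le_INR _ _ Hj). unfold seqmap in *.
    pose proof (Rmin_glb (gromov_prod (f e) (f (xs i)) (w k)) (gromov_prod (f e) (w k) (f (xs j)))
      (INR m - c) ltac:(lra) ltac:(lra)).
    lra. }
  split; [apply MB_seq_of_image, Hfx|].
  intros M0. destruct (INR_unbounded (M0 + c + delta)) as [m Hm].
  destruct (Hfx (M0 + delta)) as [n1 Hn1]. set (p := Nat.max m n1).
  exists (Nat.max p (ks p)). intros j i Hj Hi.
  pose proof (Hxs p j ltac:(lia)).
  pose proof (Hn1 p i ltac:(unfold p; lia) ltac:(lia)).
  pose proof (four_point _ _ _ (stratum_add w Hws j) (image_add xs p) (image_add xs i)).
  pose proof (le_INR m p ltac:(unfold p; lia)). unfold seqmap in *.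
  pose proof (Rmin_glb (gromov_prod (f e) (w j) (f (xs p))) (gromov_prod (f e) (f (xs p)) (f (xs i)))
    (M0 + delta) ltac:(lra) ltac:(lra)).
  lra.
Qed.

(* If every neighbourhood of w met the image, a diagonal sequence of image
   points would converge to w. *)
Lemma boundary_image_closed w : stratum_seq M (f e) w ->
  ~ (exists u, MB_seq e u /\ bequiv (f e) w (seqmap f u)) ->
  exists r, forall v, stratum_seq M (f e) v -> stratum_nbhd M (f e) w r v ->
    forall u, MB_seq e u -> ~ bequiv (f e) v (seqmap f u).
Proof.
  intros Hw Hout. apply NNPP. intros Hnear.
  assert (Hpts : forall n : nat, exists p : X * nat, forall k, (snd p <= k)%nat ->
            INR n - (1 + 2 * delta) <= gromov_prod (f e) (w k) (f (fst p))).
  { intros n. apply NNPP. intros Hno. apply Hnear. exists (INR n).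
    intros v Hv Hnb u _ Hvu.
    destruct (nbhd_image_point w v u (INR n) Hw Hv Hnb Hvu) as [x [k0 Hk]].
    apply Hno. exists (x, k0). simpl. intros k Hk0. pose proof (Hk k Hk0). lra. }
  destruct (choice _ Hpts) as [p Hp].
  apply Hout. exists (fun n => fst (p n)).
  apply (image_sequence_bequiv w _ (fun n => snd (p n)) (1 + 2 * delta) Hw). intros n k. apply Hp.
Qed.

End MixedStratum.

Lemma boundary_map_open V : MB_open e V -> exists U, MB_open (f e) U /\
  forall u, MB_seq e u -> (V u <-> U (seqmap f u)).
Proof.
  intros HV. pose proof HV as [Vsat _].
  exists (boundary_pushforward V). split; [split|].
  - apply boundary_pushforward_saturated.
  - intros M HM w Hw [_ HU].
    destruct (classic (exists u0, MB_seq e u0 /\ bequiv (f e) w (seqmap f u0)))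
      as [[u0 [Hu0 Hwu0]]|Hout].
    + exact (boundary_pushforward_open_at_image M HM V w u0 HV Hw Hu0 Hwu0 (HU u0 Hu0 Hwu0)).
    + destruct (boundary_image_closed M HM w Hw Hout) as [r Hr]. exists r.
      intros v Hv Hnb. split; [exists M; auto|].
      intros u Hu Hvu. exfalso. exact (Hr v Hv Hnb u Hu Hvu).
  - intros u Hu. split.
    + intros HVu. split; [apply MB_seq_image, Hu|].
      intros u' Hu' Hfuu'. apply (Vsat u u'); auto. apply bequiv_of_image, Hfuu'.
    + intros [_ H]. apply H; auto. apply bequiv_image, MB_seq_conv_at_inf, Hu.
Qed.

Lemma boundary_map_homeomorphism : boundary_map_homeo_onto_image f e.
Proof.
  split; [apply MB_seq_image|].
  split; [intros u v _ _; apply bequiv_image|].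
  split; [intros u v _ _; apply bequiv_of_image|].
  split; [apply boundary_map_continuous | apply boundary_map_open].
Qed.

End StableEmbedding.

Lemma stable_embedding_constants {X Y : MetricSpace} (f : X -> Y) : stable_embedding f ->
  exists K C N, 1 <= K /\ 0 <= C /\
    (forall x x', dist x x' / K - C <= dist (f x) (f x') <= K * dist x x' + C) /\
    is_gauge N /\
    (forall x x', exists g, geodesic_from_to g (f x) (f x') /\ is_morse N g (dist (f x) (f x'))).
Proof. intros [[K [C [HK [HC Hqi]]]] [N [HN Hst]]]. exists K, C, N. auto. Qed.

(* g x is within 1/2 of a vertex g h, on which f is exactly equivariant. *)
Lemma orbit_map_coarsely_equivariant (G : Group) (S : list G) (X Y : MetricSpace)
  (actX : G -> X -> X) (iota : G -> X) (actY : G -> Y -> Y) (y0 : Y) (f : X -> Y) K C :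
  cayley_model G S X actX iota -> isometric_action G Y actY ->
  (forall g, f (iota g) = actY g y0) -> 0 <= K ->
  (forall x x', dist (f x) (f x') <= K * dist x x' + C) ->
  forall g x, dist (f (actX g x)) (actY g (f x)) <= K + 2 * C.
Proof.
  intros [[_ [_ HisoX]] [Hiota [_ Hnet]]] [_ [HmulY HisoY]] Hfi HK Hlip g x.
  destruct (Hnet x) as [h Hh].
  assert (E1 : dist (actX g x) (iota (gmul g h)) <= 1/2) by (rewrite Hiota, HisoX; exact Hh).
  assert (E2 : f (iota (gmul g h)) = actY g (f (iota h))) by (rewrite !Hfi; apply HmulY).
  pose proof (Hlip (actX g x) (iota (gmul g h))) as Q1.
  pose proof (Hlip (iota h) x) as Q2. rewrite (dist_sym (iota h) x) in Q2.
  pose proof (dist_tri (f (actX g x)) (f (iota (gmul g h))) (actY g (f x))) as T.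
  rewrite E2, HisoY in T. rewrite E2 in Q1.
  assert (K * dist (actX g x) (iota (gmul g h)) <= K * (1/2)) by (apply Rmult_le_compat_l; lra).
  assert (K * dist x (iota h) <= K * (1/2)) by (apply Rmult_le_compat_l; lra).
  lra.
Qed.

Lemma boundary_map_equivariant (G : Group) (S : list G) (X Y : MetricSpace)
  (actX : G -> X -> X) (iota : G -> X) (actY : G -> Y -> Y) (y0 : Y) (f : X -> Y) (e : X) :
  geodesic_space X -> geodesic_space Y ->
  cayley_model G S X actX iota -> isometric_action G Y actY ->
  (forall g, f (iota g) = actY g y0) -> stable_embedding f ->
  forall (g : G) (u t : nat -> X) (w : nat -> Y),
    bequiv e t (seqmap (actX g) u) ->
    MB_seq (f e) w -> bequiv (f e) w (seqmap (actY g) (seqmap f u)) ->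
    bequiv (f e) (seqmap f t) w.
Proof.
  intros HX HY Hcay Hact Hfi Hst g u t w Htu [Nw [HNw [Hws _]]] Hwu.
  destruct (stable_embedding_constants f Hst) as (K & C & N & HK & HC & Hqi & HN & Hstable).
  assert (Hmove : forall j, dist (seqmap (actY g) (seqmap f u) j) (seqmap f (seqmap (actX g) u) j)
                    <= K + 2 * C).
  { intros j. unfold seqmap. rewrite dist_sym.
    apply (orbit_map_coarsely_equivariant G S X Y actX iota actY y0 f K C); auto; [lra|].
    intros x x'. apply Hqi. }
  assert (HM : is_gauge (gauge_add Nw N)) by (apply gauge_add_is_gauge; auto).
  apply (bequiv_trans (f e) _ _ _ (seqmap f (seqmap (actX g) u)) _
    (morse_stratum_four_point _ (f e) HY HM)).
  - intros n. apply morse_stratum_pt_addr; auto. exact (image_morse_stratum_pt X Y f N Hstable e _).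
  - intros n. apply morse_stratum_pt_addr; auto. exact (image_morse_stratum_pt X Y f N Hstable e _).
  - intros n. apply morse_stratum_pt_addl; auto.
  - apply (bequiv_image X Y f K C N); auto.
  - apply bequiv_sym, (bequiv_perturb _ _ _ _ _ Hmove Hwu).
Qed.

Theorem corollary2p9 :
  (forall (X Y : MetricSpace) (f : X -> Y) (e : X),
     proper X -> geodesic_space X -> proper Y -> geodesic_space Y ->
     stable_embedding f ->
     boundary_map_homeo_onto_image f e)
  /\
  (forall (G : Group) (S : list G) (X Y : MetricSpace)
     (actX : G -> X -> X) (iota : G -> X) (actY : G -> Y -> Y) (y0 : Y)
     (f : X -> Y) (e : X),
     proper X -> geodesic_space X -> proper Y -> geodesic_space Y ->
     cayley_model G S X actX iota ->
     isometric_action G Y actY ->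
     (forall g, f (iota g) = actY g y0) ->
     stable_embedding f ->
     forall (g : G) (u t : nat -> X) (w : nat -> Y),
       MB_seq e u -> MB_seq e t -> bequiv e t (seqmap (actX g) u) ->
       MB_seq (f e) w -> bequiv (f e) w (seqmap (actY g) (seqmap f u)) ->
       bequiv (f e) (seqmap f t) w).
Proof.
  split.
  - intros X Y f e _ HX _ HY Hst.
    destruct (stable_embedding_constants f Hst) as (K & C & N & HK & HC & Hqi & HN & Hstable).
    exact (boundary_map_homeomorphism X Y f K C N HX HY HK HC Hqi HN Hstable e).
  - intros G S X Y actX iota actY y0 f e _ HX _ HY Hcay Hact Hfi Hst g u t w _ _ Htu Hw Hwu.
    exact (boundary_map_equivariant G S X Y actX iota actY y0 f e HX HY Hcay Hact Hfi Hst
      g u t w Htu Hw Hwu).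
Qed.
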